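(* Consider the publishing problem with constant publishing cost, i.e. $\alpha=0$ so that $C^{(p)}_t(N)=\beta\,\mathbb{1}[N\neq\emptyset]$ for some $\beta\ge 0$ (delay costs arbitrary non-negative, price dynamics $R$ arbitrary). Then there exists an optimal policy $\pi^*$ which at every step publishes either all available transactions or none of them, i.e. for every $t$, either $N^{\pi^*}_t=Q^{\pi^*}_t$ or $N^{\pi^*}_t=\emptyset$.
   Context: The publishing problem is the following infinite-horizon Markov decision process in discrete time $t=0,1,2,\dots$. At each time step $t$ a new transaction $H_t$ is created (transactions are indexed by their creation time). The state at time $t$ is $(t,P_t,Q_t)$, where $P_t\ge 0$ is the current gas price and $Q_t$ is the set of unpublished transactions (with $Q_0=\emptyset$). A policy $\pi$ chooses a subset $N^\pi_t=\pi(t,Q_t,P_t)\subseteq Q_t$ to publish, incurring cost $C_t(P_t,Q_t,N^\pi_t)=P_t\,C^{(p)}_t(N^\pi_t)+C^{(d)}_t(Q_t\setminus N^\pi_t)$. The state then updates by $Q_{t+1}=(Q_t\setminus N^\pi_t)\cup\{H_t\}$ and $P_{t+1}=R(P_t)$, where $R$ is a random function (Markov transition) on prices whose distribution is known. The publishing cost is $C^{(p)}_t(N)=\alpha|N|+\beta\,\mathbb{1}[N\neq\emptyset]$ with $\alpha,\beta\ge0$. The delay cost is $C^{(d)}_t(N)=\sum_{H_\tau\in N}C^{(d)}_{H_\tau}(t-\tau)$, where each $C^{(d)}_{H_\tau}$ is a non-negative function of the waiting time. The expected total cost of $\pi$ is $C(\pi)=\mathbb{E}\left[\sum_t\gamma^t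 C_t(P_t,Q^\pi_t,N^\pi_t)\right]$ with discount factor $0<\gamma<1$, and $\pi^*$ is optimal if $C(\pi^* )=\min_\pi C(\pi)$. *)

From HB Require Import structures.
From mathcomp Require Import all_boot all_order all_algebra.
From mathcomp Require Import finmap.
From mathcomp Require Import all_classical all_reals all_analysis.

Set Implicit Arguments.
Unset Strict Implicit.
Unset Printing Implicit Defensive.

Import Order.TTheory GRing.Theory Num.Theory.
Local Open Scope classical_set_scope.
Local Open Scope ring_scope.

(* Transactions are identified with their creation time (a nat).
   Sets of unpublished transactions are finite sets {fset nat}.
   A (deterministic, Markov) policy maps (t, Q_t, P_t) to a set N_t. *)
Definition policy (R : realType) := nat -> {fset nat} -> R -> {fset nat}.

(* Admissible policy: publishes a subset of the available transactions,
   and is Borel-measurable in the price (so that expected costs make sense). *)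
Definition admissible (R : realType) (pi : policy R) : Prop :=
  (forall t Q p, (pi t Q p `<=` Q)%fset) /\
  (forall t Q N, measurable [set p : R | pi t Q p = N]).

Definition markov_chain (R : realType) (d : measure_display)
  (Omega : measurableType d) (P : probability Omega R)
  (X : nat -> Omega -> R) (k : R.-pker R ~> R) : Prop :=
  forall (n : nat) (A : nat -> set R), (forall i, measurable (A i)) ->
    P (\bigcap_(i in `I_n.+2) (X i @^-1` A i)) =
    (\int[P]_(w in \bigcap_(i in `I_n.+1) (X i @^-1` A i)) k (X n w) (A n.+1))%E.

Section Publishing.
Variables (R : realType) (d : measure_display) (Omega : measurableType d).

Fixpoint queue (pi : policy R) (X : nat -> Omega -> R) (w : Omega) (t : nat)
  : {fset nat} :=
  match t with
  | 0 => fset0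
  | t'.+1 => let Q := queue pi X w t' in
             ((Q `\` pi t' Q (X t' w)) `|` [fset t'])%fset
  end.

Definition published (pi : policy R) (X : nat -> Omega -> R) (w : Omega)
  (t : nat) : {fset nat} :=
  pi t (queue pi X w t) (X t w).

Definition pub_cost (alpha beta : R) (N : {fset nat}) : R :=
  alpha * (#|` N|)%:R + (if N == fset0 then 0 else beta).

Definition delay_cost (D : nat -> nat -> R) (t : nat) (N : {fset nat}) : R :=
  \sum_(tau <- N) D tau (t - tau)%N.

Definition stage_cost (alpha beta : R) (D : nat -> nat -> R) (t : nat)
  (p : R) (Q N : {fset nat}) : R :=
  p * pub_cost alpha beta N + delay_cost D t (Q `\` N)%fset.

Definition path_cost (alpha beta gamma : R) (D : nat -> nat -> R)
  (pi : policy R) (X : nat -> Omega -> R) (w : Omega) : \bar R :=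
  (\sum_(0 <= t <oo)
     (gamma ^+ t * stage_cost alpha beta D t (X t w)
        (queue pi X w t) (published pi X w t))%:E)%E.

Definition total_cost (P : probability Omega R) (alpha beta gamma : R)
  (D : nat -> nat -> R) (pi : policy R) (X : nat -> Omega -> R) : \bar R :=
  (\int[P]_w path_cost alpha beta gamma D pi X w)%E.

End Publishing.

(* Run value iteration restricted to the two actions "publish nothing" and
   "publish everything":
     V_0 = 0,  V_(m+1)(t, Q, p) = min_(N in {{}, Q}) c_t(p, Q, N)
                                  + gamma E[V_m(t+1, (Q \ N) U {t}, P_(t+1)) | P_t = p].
   The iterates are nondecreasing in the queue.  Since alpha = 0, a nonempty
   N <= Q pays the same fee p beta as N = Q but leaves a larger queue, so
   V_(m+1) lies below the one-step cost of every admissible action.  By the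
   Markov property, the expected cost of the first m steps of any admissible
   policy is then at least E[V_m(0, {}, P_0)].  The iterates increase to a
   limit V satisfying the Bellman inequality, and the policy acting greedily
   with respect to V, which by construction is all-or-nothing, has expected
   cost at most E[V(0, {}, P_0)] = lim_m E[V_m(0, {}, P_0)]. *)

From HB Require Import structures.
From mathcomp Require Import all_boot all_order all_algebra.
From mathcomp Require Import finmap.
From mathcomp Require Import all_classical all_reals all_analysis.
From mathcomp Require Import measurable_realfun.

Import Order.TTheory GRing.Theory Num.Theory.
Local Open Scope classical_set_scope.
Local Open Scope ring_scope.

Set Implicit Arguments.
Unset Strict Implicit.
Unset Printing Implicit Defensive.

Lemma measurable_const_set d (T : measurableType d) (A : Prop) :
  measurable [set _ : T | A].
Proof.
have [a|na] := pselect A.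
  by rewrite (_ : [set _ | A] = setT) //; apply/seteqP; split.
by rewrite (_ : [set _ | A] = set0) //; apply/seteqP; split.
Qed.

Section countable_cases.
Context d (T : measurableType d) (R : realType) (I : countType).
Variable q : T -> I.
Hypothesis mq : forall i, measurable (q @^-1` [set i]).

Lemma measurable_preimage_countable (C : set I) : measurable (q @^-1` C).
Proof.
have -> : q @^-1` C = \bigcup_(i in C) q @^-1` [set i].
  by apply/seteqP; split => [w Cqw|w [i Ci /= ->//]]; exists (q w).
rewrite bigcup_mkcond; apply: countable_bigcupT_measurable; first exact: countableP.
by move=> i; case: ifP.
Qed.

Lemma measurable_fun_countable_cases (f : I -> T -> \bar R) :
  (forall i, measurable_fun setT (f i)) -> measurable_fun setT (fun w => f (q w) w).
Proof.
move=> mf _ B mB; rewrite setTI.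
have -> : (fun w => f (q w) w) @^-1` B =
    \bigcup_(i : I) (q @^-1` [set i] `&` f i @^-1` B).
  by apply/seteqP; split => [w Bw|w [i _ [/= <-]]]; first by exists (q w).
apply: countable_bigcupT_measurable; first exact: countableP.
by move=> i; apply: measurableI => //; rewrite -[X in measurable X]setTI; exact: mf.
Qed.

Lemma eq_integral_countable_cases (mu : {measure set T -> \bar R}) (f g : T -> \bar R) :
  (forall w, (0 <= f w)%E) -> (forall w, (0 <= g w)%E) ->
  measurable_fun setT f -> measurable_fun setT g ->
  (forall i, \int[mu]_(w in q @^-1` [set i]) f w = \int[mu]_(w in q @^-1` [set i]) g w)%E ->
  (\int[mu]_w f w = \int[mu]_w g w)%E.
Proof.
move=> f0 g0 mf mg fg.
(* [pickle] turns the countable partition by [q] into a [nat]-indexed one. *)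
pose F (n : nat) := q @^-1` [set i | choice.pickle i = n].
have FE n : F n = if choice.pickle_inv n is Some i then q @^-1` [set i] else set0.
  apply/seteqP; split => w /=; first by move=> <-; rewrite choice.pickleK_inv.
  case E: (choice.pickle_inv n) => [i|//] /= qi.
  rewrite /F /= qi.
  by have := @choice.pickle_invK I n; rewrite E.
have mF n : measurable (F n) by exact: measurable_preimage_countable.
have UF : \bigcup_n F n = setT by apply/seteqP; split => // w _; exists (choice.pickle (q w)).
have tF : trivIset setT F by move=> a b _ _ [w [/= <- <-]].
rewrite -UF !ge0_integral_bigcup ?UF//.
apply: eq_eseriesr => n _; rewrite FE; case: (choice.pickle_inv n) => [i|]; first exact: fg.
by rewrite !integral_set0.
Qed.

End countable_cases.

Section disintegration.
Local Open Scope ereal_scope.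
Context d d' (T : measurableType d) (T' : measurableType d') (R : realType).
Variables (mu : {measure set T -> \bar R}) (S : set T) (mS : measurable S)
  (Y : T -> T') (mY : measurable_fun setT Y)
  (kap : T -> {measure set T' -> \bar R})
  (mkap : forall A, measurable A -> measurable_fun setT (kap ^~ A)).
Hypothesis mu_kap : forall A, measurable A ->
  mu (S `&` Y @^-1` A) = \int[mu]_(w in S) kap w A.

Import HBNNSimple.

Let integral_disintegration_nnsfun (f : {nnsfun T' >-> R}) :
  \int[mu]_(w in S) (f (Y w))%:E = \int[mu]_(w in S) \int[kap w]_y (f y)%:E.
Proof.
under [in RHS]eq_integral => w _.
  rewrite integral_nnsfun// patch_setT sintegralE /=.
  over.
rewrite /= ge0_integral_fsum//; last 2 first.
  - move=> r; apply: measurable_funeM.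
    by apply: (measurable_funS measurableT) => //; exact: mkap.
  - move=> r w _; exact: nnsfun_mulemu_ge0.
under [in LHS]eq_integral do rewrite fimfunE -fsumEFin//.
rewrite ge0_integral_fsum//; last 2 first.
  - move=> r; apply/measurable_EFinP; apply: measurable_funM => //.
    by apply: measurableT_comp => //; apply: measurableT_comp.
  - by move=> r z _; rewrite EFinM nnfun_muleindic_ge0.
apply: eq_fsbigr => r rf.
have r0 : (0 <= r)%R by move: rf; rewrite inE => -[y _ <-]; exact: fun_ge0.
under eq_integral do rewrite EFinM.
rewrite ge0_integralZl//; last first.
  apply/measurable_EFinP; apply: (measurable_funS measurableT) => //.
  by apply: measurableT_comp => //; exact: measurable_indic.
rewrite ge0_integralZl//; last first.
  by apply: (measurable_funS measurableT) => //; exact: mkap.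
congr (_ * _).
have mfr : measurable (f @^-1` [set r]) by exact: measurable_sfunP.
rewrite -(mu_kap mfr).
transitivity (\int[mu]_(x in S) (\1_(Y @^-1` (f @^-1` [set r])) x)%:E) => //.
rewrite integral_indic//; first by rewrite setIC.
by rewrite -[X in measurable X]setTI; apply: mY.
Qed.

Lemma integral_disintegration (g : T' -> \bar R) : (forall y, 0 <= g y) ->
  measurable_fun setT g ->
  \int[mu]_(w in S) g (Y w) = \int[mu]_(w in S) \int[kap w]_y g y.
Proof.
move=> g0 mg.
pose g_ := nnsfun_approx measurableT mg.
have cg y : (EFin \o g_^~ y) @ \oo --> g y.
  by apply: cvg_nnsfun_approx => // x _; exact: g0.
have ndg : nondecreasing_seq (g_ : (T' -> R)^nat) by exact: nd_nnsfun_approx.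
transitivity (\int[mu]_(w in S) limn (fun n => (g_ n (Y w))%:E)).
  by apply: eq_integral => w _; apply/esym/cvg_lim => //; exact: cg.
rewrite monotone_convergence//; last 3 first.
  - move=> n; apply/measurable_EFinP; apply: (measurable_funS measurableT) => //.
    exact: measurableT_comp.
  - by move=> n w _; rewrite lee_fin.
  - by move=> w _ a b ab; rewrite lee_fin; exact/lefP/ndg.
under eq_fun do rewrite integral_disintegration_nnsfun.
rewrite -monotone_convergence//; last 3 first.
  - move=> n; apply: (measurable_funS measurableT) => //.
    apply: measurable_fun_integral_kernel => //.
    + by move=> y; rewrite lee_fin.
    + exact/measurable_EFinP.
  - by move=> n w _; apply: integral_ge0 => y _; rewrite lee_fin.
  - move=> w _ a b ab; apply: ge0_le_integral => //.
    + by move=> y _; rewrite lee_fin.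
    + exact/measurable_EFinP.
    + exact/measurable_EFinP.
    + by move=> y _; rewrite lee_fin; exact/lefP/ndg.
apply: eq_integral => w _; rewrite -monotone_convergence//; last 3 first.
  - by move=> n; exact/measurable_EFinP.
  - by move=> n y _; rewrite lee_fin.
  - by move=> y _ a b ab; rewrite lee_fin; exact/lefP/ndg.
by apply: eq_integral => y _; apply/cvg_lim => //; exact: cg.
Qed.

End disintegration.

Section markov.
Local Open Scope ereal_scope.
Context (R : realType) (d : measure_display) (Omega : measurableType d)
  (P : probability Omega R) (X : nat -> Omega -> R) (k : R.-pker R ~> R).
Hypotheses (mX : forall t, measurable_fun setT (X t)) (mc : markov_chain P X k).

Definition cylinder j (A : nat -> set R) := \bigcap_(i in `I_j.+1) X i @^-1` A i.

(* [<<s cylinders j >>] is the sigma-algebra of events observed up to time [j]. *)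
Definition cylinders j := [set S | exists2 A : nat -> set R,
  (forall i, measurable (A i)) & S = cylinder j A].

Lemma measurable_path_preimage i B : measurable B -> measurable (X i @^-1` B).
Proof. by move=> mB; rewrite -[X in measurable X]setTI; exact: mX. Qed.

Lemma measurable_cylinders_sigma j S : <<s cylinders j >> S -> measurable S.
Proof.
apply: smallest_sub; first exact: sigma_algebra_measurable.
move=> _ [A mA ->]; apply: bigcap_measurable; first by exists 0%N.
by move=> i _; exact: measurable_path_preimage.
Qed.

Lemma cylinders_setI_closed j : setI_closed (cylinders j).
Proof.
move=> _ _ [A mA ->] [B mB ->]; exists (fun i => A i `&` B i).
  by move=> i; exact: measurableI.
apply/seteqP; split => w.
  by move=> [hA hB] i /= ij; split; [exact: hA|exact: hB].
by move=> h; split => i ij; have [] := h i ij.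
Qed.

Lemma cylinders_preimage j i B : (i <= j)%N -> measurable B ->
  cylinders j (X i @^-1` B).
Proof.
move=> ij mB; exists (fun l => if l == i then B else setT).
  by move=> l; case: ifP.
apply/seteqP; split => w.
  by move=> h l /= lj; case: ifP => // /eqP ->.
by move=> h; have := h i; rewrite eqxx; apply => /=; rewrite ltnS.
Qed.

Lemma measurable_kernel_path j A : measurable A ->
  measurable_fun setT (fun w => k (X j w) A).
Proof. by move=> mA; exact: measurableT_comp (measurable_kernel k _ mA) (mX j). Qed.

Lemma markov_cylinder j B A : (forall i, measurable (B i)) -> measurable A ->
  P (cylinder j B `&` X j.+1 @^-1` A) = \int[P]_(w in cylinder j B) k (X j w) A.
Proof.
move=> mB mA.
have := mc j (A := fun i => if i == j.+1 then A else B i).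
have -> : \bigcap_(i in `I_j.+2) X i @^-1` (if i == j.+1 then A else B i) =
    cylinder j B `&` X j.+1 @^-1` A.
  apply/seteqP; split => w.
    move=> h; split; last by have := h j.+1; rewrite eqxx; apply => /=.
    move=> i /= ij; have := h i; rewrite ifN ?neq_ltn ?ij//.
    by apply => /=; rewrite ltnS ltnW.
  move=> [h1 h2] i /=; rewrite ltnS leq_eqVlt => /orP[/eqP ->|ij].
    by rewrite eqxx.
  by rewrite ifN ?neq_ltn ?ij//; apply: h1.
have -> : \bigcap_(i in `I_j.+1) X i @^-1` (if i == j.+1 then A else B i) =
    cylinder j B.
  by apply/seteqP; split => w h i /= ij; have := h i ij; rewrite ifN// neq_ltn ij.
by rewrite eqxx; apply => i; case: ifP.
Qed.

Lemma markov_sigma j S : <<s cylinders j >> S -> forall A, measurable A ->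
  P (S `&` X j.+1 @^-1` A) = \int[P]_(w in S) k (X j w) A.
Proof.
move=> sS.
have markovT A : measurable A ->
    P (setT `&` X j.+1 @^-1` A) = \int[P]_(w in setT) k (X j w) A.
  have [B mB ->] : cylinders j setT by rewrite -(preimage_setT (X 0)); exact: cylinders_preimage.
  by move=> mA; exact: markov_cylinder.
apply: (@dynkin_induction _ (g_sigma_algebraType (cylinders j)) (cylinders j)
   [set S | forall A, measurable A ->
     P (S `&` X j.+1 @^-1` A) = \int[P]_(w in S) k (X j w) A]) => //.
- exact: cylinders_setI_closed.
- by move=> _ [B mB ->] A mA; exact: markov_cylinder.
- move=> S0 /measurable_cylinders_sigma mS0 h A mA.
  have mXA := measurable_path_preimage j.+1 mA.
  have := markovT A mA.
  rewrite -(setUv S0) setIUl measureU/=; last 3 first.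
    - exact: measurableI.
    - by apply: measurableI => //; exact: measurableC.
    - by rewrite setIACA setICr set0I.
  rewrite ge0_integral_setU//; last 3 first.
    - exact: measurableC.
    - by apply: (measurable_funS measurableT) => //; exact: measurable_kernel_path.
    - by rewrite disj_set2E setICr.
  (* subtract the (finite) identity for [S0] from the one for [setT] *)
  have fS : \int[P]_(w in S0) k (X j w) A \is a fin_num.
    by rewrite -h// fin_num_measure//; exact: measurableI.
  rewrite h// !(addeC (\int[P]_(w in S0) k (X j w) A)).
  by move=> /(congr1 (fun x => x - \int[P]_(w in S0) k (X j w) A)); rewrite !addeK.
- move=> F mF tF h A mA.
  have mF' n : @measurable _ Omega (F n) := measurable_cylinders_sigma (mF n).
  have mXA := measurable_path_preimage j.+1 mA.
  rewrite setI_bigcupl measure_semi_bigcup//; first last.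
  - by apply: bigcupT_measurable => n; exact: measurableI.
  - exact: trivIset_setIr.
  - by move=> n; exact: measurableI.
  rewrite ge0_integral_bigcup//.
  - by apply: eq_eseriesr => n _; exact: h.
  - by apply: (measurable_funS measurableT) => //; exact: measurable_kernel_path.
Qed.

Lemma markov_sigma_integral j S (g : R -> \bar R) : <<s cylinders j >> S ->
  (forall y, 0 <= g y) -> measurable_fun setT g ->
  \int[P]_(w in S) g (X j.+1 w) = \int[P]_(w in S) \int[k (X j w)]_y g y.
Proof.
move=> sS g0 mg; apply: integral_disintegration => //.
- exact: measurable_cylinders_sigma sS.
- by move=> A mA; exact: measurable_kernel_path.
- exact: markov_sigma.
Qed.

(* The conditional form of the Markov property: [q] is known at time [j]. *)
Lemma markov_integral_countable (I : countType) j (q : Omega -> I)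
    (h : I -> R -> \bar R) :
  (forall i, <<s cylinders j >> (q @^-1` [set i])) ->
  (forall i y, 0 <= h i y) -> (forall i, measurable_fun setT (h i)) ->
  \int[P]_w h (q w) (X j.+1 w) = \int[P]_w \int[k (X j w)]_y h (q w) y.
Proof.
move=> sq h0 mh.
have mq i : measurable (q @^-1` [set i]) := measurable_cylinders_sigma (sq i).
apply: (eq_integral_countable_cases mq) => //.
- by move=> w; apply: integral_ge0 => y _.
- apply: (measurable_fun_countable_cases mq (f := fun i w => h i (X j.+1 w))) => // i.
  exact: measurableT_comp.
- apply: (measurable_fun_countable_cases mq (f := fun i w => \int[k (X j w)]_y h i y)) => // i.
  exact: measurableT_comp
    (measurable_fun_integral_kernel (measurable_kernel k) (h0 i) (mh i)) (mX j).
move=> i; transitivity (\int[P]_(w in q @^-1` [set i]) h i (X j.+1 w)).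
  by apply: eq_integral => w; rewrite inE /= => ->.
rewrite markov_sigma_integral//.
by apply: eq_integral => w; rewrite inE /= => ->.
Qed.

End markov.

Section dynamic_programming.
Context (R : realType) (k : R.-pker R ~> R) (beta gamma : R) (D : nat -> nat -> R).
Hypotheses (beta0 : 0 <= beta) (gamma0 : 0 < gamma) (D0 : forall tau w, 0 <= D tau w).

Lemma delay_cost_ge0 t N : 0 <= delay_cost D t N.
Proof. exact: sumr_ge0. Qed.

Lemma delay_cost_subset t N N' : (N `<=` N')%fset ->
  delay_cost D t N <= delay_cost D t N'.
Proof.
move=> NN'; rewrite /delay_cost (big_fsetID _ (mem N) N') /=.
rewrite [in X in _ <= X](@eq_fbigl _ _ _ _ _ N); last first.
  move=> x; rewrite !inE; apply/andP/idP => [[]//|xN].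
  by split=> //; exact: (fsubsetP NN').
by rewrite lerDl; exact: sumr_ge0.
Qed.

Lemma pub_cost0_ge0 N : 0 <= pub_cost 0 beta N.
Proof. by rewrite /pub_cost mul0r add0r; case: ifP. Qed.

Lemma stage_cost0_ge0 t p Q N : 0 <= p -> 0 <= stage_cost 0 beta D t p Q N.
Proof.
by move=> p0; rewrite addr_ge0 ?delay_cost_ge0// mulr_ge0// pub_cost0_ge0.
Qed.

(* Clipping the price at [0] makes every cost below nonnegative; along the
   paths of the theorem prices are nonnegative, so nothing changes there. *)
Definition clipped_cost t p Q N : R := stage_cost 0 beta D t (Num.max p 0) Q N.

Definition next_queue t (Q N : {fset nat}) := ((Q `\` N) `|` [fset t])%fset.

Lemma clipped_cost_ge0 t p Q N : 0 <= clipped_cost t p Q N.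
Proof. by apply: stage_cost0_ge0; rewrite le_max lexx orbT. Qed.

Lemma measurable_clipped_cost t Q N : measurable_fun setT (fun p => clipped_cost t p Q N).
Proof.
apply: measurable_funD => //; apply: measurable_funM => //.
exact: measurable_maxr.
Qed.

Lemma clipped_cost_all t p Q :
  clipped_cost t p Q Q = Num.max p 0 * (if Q == fset0 then 0 else beta).
Proof.
rewrite /clipped_cost /stage_cost /pub_cost fsetDv /delay_cost big_seq_fset0.
by rewrite mul0r add0r addr0.
Qed.

Lemma clipped_cost_none t p Q : clipped_cost t p Q fset0 = delay_cost D t Q.
Proof.
by rewrite /clipped_cost /stage_cost /pub_cost eqxx mul0r add0r mulr0 add0r fsetD0.
Qed.

Lemma next_queue_all t Q : next_queue t Q Q = [fset t]%fset.
Proof. by rewrite /next_queue fsetDv fset0U. Qed.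

Lemma next_queue_none t Q : next_queue t Q fset0 = (Q `|` [fset t])%fset.
Proof. by rewrite /next_queue fsetD0. Qed.

Local Open Scope ereal_scope.

Definition nonneg_measurable_value (V : nat -> {fset nat} -> R -> \bar R) :=
  (forall t Q, measurable_fun setT (V t Q)) /\ (forall t Q p, 0 <= V t Q p).

Definition qvalue (V : nat -> {fset nat} -> R -> \bar R) t Q p N :=
  (clipped_cost t p Q N)%:E + gamma%:E * \int[k p]_y V t.+1 (next_queue t Q N) y.

Fixpoint value_iter m : nat -> {fset nat} -> R -> \bar R :=
  if m is m'.+1 then fun t Q p =>
    mine (qvalue (value_iter m') t Q p fset0) (qvalue (value_iter m') t Q p Q)
  else fun _ _ _ => 0.

Section bellman_operator.
Variable V : nat -> {fset nat} -> R -> \bar R.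
Hypothesis V_nnm : nonneg_measurable_value V.

Lemma measurable_qvalue t Q N : measurable_fun setT (qvalue V t Q ^~ N).
Proof.
have [mV V0] := V_nnm.
apply: emeasurable_funD.
  by apply/measurable_EFinP; exact: measurable_clipped_cost.
apply: measurable_funeM.
exact: (measurable_fun_integral_kernel (measurable_kernel k) (V0 _ _) (mV _ _)).
Qed.

Lemma qvalue_ge0 t Q p N : 0 <= qvalue V t Q p N.
Proof.
apply: adde_ge0; first by rewrite lee_fin clipped_cost_ge0.
apply: mule_ge0; first by rewrite lee_fin ltW.
by apply: integral_ge0 => y _; exact: V_nnm.2.
Qed.

Lemma le_qvalue t Q Q' p N N' :
  (forall t A B p, (A `<=` B)%fset -> V t A p <= V t B p) ->
  (clipped_cost t p Q N <= clipped_cost t p Q' N')%R ->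
  (next_queue t Q N `<=` next_queue t Q' N')%fset ->
  qvalue V t Q p N <= qvalue V t Q' p N'.
Proof.
have [mV V0] := V_nnm; move=> monoV c1 n1.
apply: leeD; first by rewrite lee_fin.
apply: lee_wpmul2l; first by rewrite lee_fin ltW.
by apply: ge0_le_integral => // y _; exact: monoV.
Qed.

Lemma le_qvalueV V' t Q p N : nonneg_measurable_value V' ->
  (forall t Q p, V t Q p <= V' t Q p) -> qvalue V t Q p N <= qvalue V' t Q p N.
Proof.
have [mV V0] := V_nnm; move=> [mV' V'0] VV'; apply: leeD2l.
apply: lee_wpmul2l; first by rewrite lee_fin ltW.
by apply: ge0_le_integral => // y _; exact: VV'.
Qed.

End bellman_operator.

Lemma value_iter_nonneg_measurable m : nonneg_measurable_value (value_iter m).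
Proof.
elim: m => [|m IH]; first by split => // t Q; exact: measurable_cst.
split => [t Q | t Q p].
  by apply: measurable_mine; exact: measurable_qvalue.
by rewrite /= le_min !qvalue_ge0.
Qed.

Lemma value_iter_nd m t Q p : value_iter m t Q p <= value_iter m.+1 t Q p.
Proof.
elim: m t Q p => [|m IH] t Q p; first exact: (value_iter_nonneg_measurable 1).2.
apply: le_min2; apply: le_qvalueV;
  by [exact: (value_iter_nonneg_measurable m) |
      exact: (value_iter_nonneg_measurable m.+1) | exact: IH].
Qed.

Lemma value_iter_subset m t A B p : (A `<=` B)%fset ->
  value_iter m t A p <= value_iter m t B p.
Proof.
elim: m t A B p => [//|m IH] t A B p AB /=.
have nnmV := value_iter_nonneg_measurable m.
rewrite le_min; apply/andP; split.
  rewrite ge_min; apply/orP; left; apply: le_qvalue => //.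
    by rewrite !clipped_cost_none; exact: delay_cost_subset.
  by rewrite !next_queue_none; exact: fsetSU.
have [->|A0] := eqVneq A fset0.
  rewrite ge_min; apply/orP; left; apply: le_qvalue => //.
    by rewrite clipped_cost_none /delay_cost big_seq_fset0 clipped_cost_ge0.
  by rewrite next_queue_none next_queue_all fset0U fsubset_refl.
have B0 : B != fset0 by apply: contraNneq A0 => B0; rewrite -fsubset0 -B0.
rewrite ge_min; apply/orP; right; apply: le_qvalue => //.
  by rewrite !clipped_cost_all (negbTE A0) (negbTE B0).
by rewrite !next_queue_all fsubset_refl.
Qed.

(* The heart of the matter: with [alpha = 0] any nonempty [N] costs as much as
   publishing all of [Q], and it leaves a larger queue behind. *)
Lemma value_iter_le_qvalue m t Q p N : (N `<=` Q)%fset ->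
  value_iter m.+1 t Q p <= qvalue (value_iter m) t Q p N.
Proof.
move=> NQ /=; have nnmV := value_iter_nonneg_measurable m.
have [->|N0] := eqVneq N fset0; first by rewrite ge_min lexx.
have Q0 : Q != fset0 by apply: contraNneq N0 => Q0; rewrite -fsubset0 -Q0.
rewrite ge_min; apply/orP; right; apply: le_qvalue => //.
- by move=> *; exact: value_iter_subset.
- rewrite clipped_cost_all (negbTE Q0) /clipped_cost /stage_cost /pub_cost (negbTE N0).
  by rewrite mul0r add0r lerDl delay_cost_ge0.
- by rewrite next_queue_all /next_queue fsubsetUr.
Qed.

Definition value t Q p := limn (fun m => value_iter m t Q p).

Lemma value_iter_ndseq t Q p : nondecreasing_seq (fun m => value_iter m t Q p).
Proof. by apply/nondecreasing_seqP => m; exact: value_iter_nd. Qed.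

Lemma value_iter_cvg t Q p : (fun m => value_iter m t Q p) @ \oo --> value t Q p.
Proof. exact: ereal_nondecreasing_is_cvgn (value_iter_ndseq t Q p). Qed.

Lemma value_iter_le_value m t Q p : value_iter m t Q p <= value t Q p.
Proof.
rewrite /value (cvg_lim _ (ereal_nondecreasing_cvgn (value_iter_ndseq t Q p)))//.
by apply: ereal_sup_ubound; exists m.
Qed.

Lemma value_nonneg_measurable : nonneg_measurable_value value.
Proof.
split => [t Q|t Q p].
  apply: (emeasurable_fun_cvg (fun m => value_iter m t Q)).
    by move=> m; exact: (value_iter_nonneg_measurable m).1.
  by move=> p _; exact: value_iter_cvg.
exact: le_trans ((value_iter_nonneg_measurable 0).2 t Q p) (value_iter_le_value 0 t Q p).
Qed.

Lemma qvalue_value_iter_cvg t Q p N :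
  (fun m => qvalue (value_iter m) t Q p N) @ \oo --> qvalue value t Q p N.
Proof.
apply: cvgeD; [exact: fin_num_adde_defr | exact: cvg_cst |].
apply: cvgeZl => //.
apply: (@cvg_monotone_convergence _ _ _ (k p) setT _
  (fun m => value_iter m t.+1 (next_queue t Q N))) => //.
- by move=> m; exact: (value_iter_nonneg_measurable m).1.
- by move=> m y _; exact: (value_iter_nonneg_measurable m).2.
- by move=> y _; exact: value_iter_ndseq.
Qed.

Lemma min_qvalue_le_value t Q p :
  mine (qvalue value t Q p fset0) (qvalue value t Q p Q) <= value t Q p.
Proof.
(* Otherwise both q-values of some finite iterate would exceed [value]. *)
set L := value t Q p.
have qvalue_lt N : L < qvalue value t Q p N -> exists m, L < qvalue (value_iter m) t Q p N.
  move=> LN; apply: contrapT => nex; move: LN; rewrite ltNge => /negP; apply.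
  apply: (cvge_to_le (@qvalue_value_iter_cvg t Q p N)); apply: nearW => m.
  by rewrite leNgt; apply/negP => Lm; apply: nex; exists m.
have qvalue_nd N m n : (m <= n)%N ->
    qvalue (value_iter m) t Q p N <= qvalue (value_iter n) t Q p N.
  move=> mn; apply: le_qvalueV; try exact: value_iter_nonneg_measurable.
  by move=> t' Q' p'; exact: value_iter_ndseq.
rewrite leNgt; apply/negP; rewrite lt_min => /andP[/qvalue_lt[m1 h1] /qvalue_lt[m2 h2]].
have := value_iter_le_value (maxn m1 m2).+1 t Q p; rewrite /= -/L leNgt lt_min.
move=> /negP; apply; apply/andP; split.
  by apply: (lt_le_trans h1); apply: qvalue_nd; exact: leq_maxl.
by apply: (lt_le_trans h2); apply: qvalue_nd; exact: leq_maxr.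
Qed.

Definition all_or_nothing : policy R := fun t Q p =>
  if qvalue value t Q p fset0 <= qvalue value t Q p Q then fset0 else Q.

Lemma all_or_nothing_admissible : admissible all_or_nothing.
Proof.
split=> [t Q p | t Q N].
  by rewrite /all_or_nothing; case: ifP => _; [exact: fsub0set | exact: fsubset_refl].
pose S := [set p | qvalue value t Q p fset0 <= qvalue value t Q p Q].
have mS : measurable S.
  rewrite -[X in measurable X]setTI; apply: measurable_lee => //;
  exact: measurable_qvalue value_nonneg_measurable _ _ _.
have -> : [set p | all_or_nothing t Q p = N] =
    (S `&` [set _ | fset0 = N]) `|` (~` S `&` [set _ | Q = N]).
  apply/seteqP; split => p; rewrite /all_or_nothing /S /=.
    by case: ifP => h E; [left | right]; split => //; rewrite h.
  by case: ifP => h [[h1 h2] | [h1 h2]] //; move: h1; rewrite h.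
apply: measurableU; apply: measurableI => //; try exact: measurable_const_set.
exact: measurableC.
Qed.

Lemma qvalue_all_or_nothing_le_value t Q p :
  qvalue value t Q p (all_or_nothing t Q p) <= value t Q p.
Proof.
apply: le_trans (min_qvalue_le_value t Q p); rewrite /all_or_nothing.
case: ifP => h; rewrite le_min lexx ?h//= andbT.
by move/negbT: h; rewrite -ltNge => /ltW.
Qed.

End dynamic_programming.

Section publishing.
Context (R : realType) (d : measure_display) (Omega : measurableType d)
  (P : probability Omega R) (X : nat -> Omega -> R) (k : R.-pker R ~> R)
  (beta gamma : R) (D : nat -> nat -> R).
Hypotheses (beta0 : 0 <= beta) (gamma0 : 0 < gamma) (D0 : forall tau w, 0 <= D tau w)
  (mX : forall t, measurable_fun setT (X t)) (X0 : forall t w, 0 <= X t w)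
  (mc : markov_chain P X k).

Section admissible_policy.
Variables (pi : policy R) (adm : admissible pi).

Lemma queue_sigma j m : (j <= m.+1)%N ->
  forall Q, <<s cylinders X m >> ((fun w => queue pi X w j) @^-1` [set Q]).
Proof.
elim: j => [|j IH] jm Q.
  have [<-|Q0] := pselect (fset0 = Q).
    rewrite (_ : _ @^-1` _ = setT); last by apply/seteqP; split.
    exact: (@measurableT _ (g_sigma_algebraType (cylinders X m))).
  rewrite (_ : _ @^-1` _ = set0); last by apply/seteqP; split.
  exact: (@measurable0 _ (g_sigma_algebraType (cylinders X m))).
have -> : (fun w => queue pi X w j.+1) @^-1` [set Q] = \bigcup_(Q' : {fset nat})
    ((fun w => queue pi X w j) @^-1` [set Q'] `&`
     X j @^-1` (pi j Q' @^-1` [set N | next_queue j Q' N = Q])).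
  by apply/seteqP; split => [w /= <-|w [Q' _ [/= -> //]]]; exists (queue pi X w j).
apply: (@countable_bigcupT_measurable _ (g_sigma_algebraType (cylinders X m))).
  exact: countableP.
move=> Q'; apply: (@measurableI _ (g_sigma_algebraType (cylinders X m))).
  by apply: IH; exact: ltnW.
apply: (@sub_sigma_algebra _ setT (cylinders X m)); apply: cylinders_preimage => //.
by apply: measurable_preimage_countable; exact: adm.2.
Qed.

Lemma measurable_queue j Q : measurable ((fun w => queue pi X w j) @^-1` [set Q]).
Proof. exact: (measurable_cylinders_sigma mX (queue_sigma (leqnSn j) Q)). Qed.

Lemma measurable_published_fiber j Q N :
  measurable ((fun w => pi j Q (X j w)) @^-1` [set N]).
Proof. exact: measurable_path_preimage mX j _ (adm.2 j Q N). Qed.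

Lemma measurable_fun_state_action j (f : {fset nat} -> {fset nat} -> R -> \bar R) :
  (forall Q N, measurable_fun setT (f Q N)) ->
  measurable_fun setT (fun w => f (queue pi X w j) (published pi X w j) (X j w)).
Proof.
move=> mf; apply: (measurable_fun_countable_cases (measurable_queue j)
  (f := fun Q w => f Q (pi j Q (X j w)) (X j w))) => Q.
apply: (measurable_fun_countable_cases (measurable_published_fiber j Q)
  (f := fun N w => f Q N (X j w))) => N.
exact: measurableT_comp (mf Q N) (mX j).
Qed.

Lemma measurable_discounted_stage_cost j : measurable_fun setT (fun w =>
  (gamma ^+ j * stage_cost 0 beta D j (X j w) (queue pi X w j) (published pi X w j))%:E).
Proof.
apply: (@measurable_fun_state_action j
  (fun Q N p => (gamma ^+ j * stage_cost 0 beta D j p Q N)%:E)) => Q N.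
apply/measurable_EFinP; apply: measurable_funM => //.
by apply: measurable_funD => //; apply: measurable_funM.
Qed.

Definition expected_stage_cost j := (\int[P]_w
  (gamma ^+ j * stage_cost 0 beta D j (X j w) (queue pi X w j)
     (published pi X w j))%:E)%E.

Definition expected_value (V : nat -> {fset nat} -> R -> \bar R) j :=
  (\int[P]_w ((gamma ^+ j)%:E * V j (queue pi X w j) (X j w)))%E.

Lemma expected_stage_cost_ge0 j : (0 <= expected_stage_cost j)%E.
Proof.
by apply: integral_ge0 => w _; rewrite lee_fin mulr_ge0 ?exprn_ge0 ?(ltW gamma0)
  ?stage_cost0_ge0.
Qed.

Local Open Scope ereal_scope.

Section value_function.
Variable V : nat -> {fset nat} -> R -> \bar R.
Hypothesis V_nnm : nonneg_measurable_value V.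

Lemma measurable_discounted_value j :
  measurable_fun setT (fun w => (gamma ^+ j)%:E * V j (queue pi X w j) (X j w)).
Proof.
apply: (@measurable_fun_state_action j (fun Q N p => (gamma ^+ j)%:E * V j Q p)) => Q N.
by apply: measurable_funeM; exact: V_nnm.1.
Qed.

Lemma measurable_discounted_qvalue j : measurable_fun setT (fun w =>
  (gamma ^+ j)%:E * qvalue k beta gamma D V j (queue pi X w j) (X j w) (published pi X w j)).
Proof.
apply: (@measurable_fun_state_action j (fun Q N p =>
  (gamma ^+ j)%:E * qvalue k beta gamma D V j Q p N)) => Q N.
by apply: measurable_funeM; exact: measurable_qvalue.
Qed.

Lemma expected_qvalue_step j :
  \int[P]_w ((gamma ^+ j)%:E *
    qvalue k beta gamma D V j (queue pi X w j) (X j w) (published pi X w j)) =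
  expected_stage_cost j + expected_value V j.+1.
Proof.
have [mV V0] := V_nnm.
have gj0 i : (0 <= gamma ^+ i)%R by rewrite exprn_ge0// ltW.
under eq_integral => w _.
  rewrite /qvalue /clipped_cost max_l// ge0_muleDr; last 2 first.
  - by rewrite lee_fin stage_cost0_ge0.
  - by rewrite mule_ge0 ?lee_fin ?(ltW gamma0)//; apply: integral_ge0.
  rewrite -EFinM muleA -EFinM -exprSr.
  over.
rewrite ge0_integralD//; last 4 first.
- by move=> w _; rewrite lee_fin mulr_ge0 ?stage_cost0_ge0.
- exact: measurable_discounted_stage_cost.
- by move=> w _; rewrite mule_ge0 ?lee_fin//; apply: integral_ge0.
- apply: (@measurable_fun_state_action j (fun Q N p =>
    (gamma ^+ j.+1)%:E * \int[k p]_y V j.+1 (next_queue j Q N) y)) => Q N.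
  apply: measurable_funeM.
  exact: (measurable_fun_integral_kernel (measurable_kernel k) (V0 _ _) (mV _ _)).
congr (_ + _); rewrite /expected_value.
under eq_integral do rewrite -ge0_integralZl ?lee_fin//.
apply/esym; apply: (markov_integral_countable mX mc
  (q := fun w => queue pi X w j.+1) (h := fun Q y => (gamma ^+ j.+1)%:E * V j.+1 Q y)).
- by move=> Q; exact: queue_sigma.
- by move=> Q y; rewrite mule_ge0 ?lee_fin.
- by move=> Q; apply: measurable_funeM.
Qed.

End value_function.

Lemma expected_value_iter_step m j :
  expected_value (value_iter k beta gamma D m.+1) j <=
  expected_stage_cost j + expected_value (value_iter k beta gamma D m) j.+1.
Proof.
have nnmV := value_iter_nonneg_measurable k beta0 gamma0 D0.
have gj0 : (0 <= gamma ^+ j)%R by rewrite exprn_ge0// ltW.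
rewrite -expected_qvalue_step//; apply: ge0_le_integral => //.
- by move=> w _; rewrite mule_ge0 ?lee_fin//; exact: (nnmV m.+1).2.
- exact: measurable_discounted_value.
- exact: measurable_discounted_qvalue.
- move=> w _; apply: lee_wpmul2l; first by rewrite lee_fin.
  by apply: value_iter_le_qvalue => //; exact: adm.1.
Qed.

Lemma expected_value_iter_le_partial_cost m j :
  expected_value (value_iter k beta gamma D m) j <=
  \sum_(j <= i < j + m) expected_stage_cost i.
Proof.
elim: m j => [|m IH] j.
  rewrite addn0 big_geq// /expected_value.
  by under eq_integral do rewrite mule0; rewrite integral0.
apply: le_trans (expected_value_iter_step m j) _.
rewrite addnS big_ltn ?ltnS ?leq_addr//.
by apply: leeD2l; rewrite -addSn; exact: IH.
Qed.

Lemma total_cost_series :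
  total_cost P 0 beta gamma D pi X = \sum_(0 <= i <oo) expected_stage_cost i.
Proof.
rewrite /total_cost /path_cost integral_nneseries//.
- exact: measurable_discounted_stage_cost.
- by move=> i w _; rewrite lee_fin mulr_ge0 ?exprn_ge0 ?(ltW gamma0) ?stage_cost0_ge0.
Qed.

Lemma expected_value0 V : expected_value V 0 = (\int[P]_w V 0%N fset0 (X 0%N w))%E.
Proof. by apply: eq_integral => w _; rewrite expr0 mul1e. Qed.

End admissible_policy.

Local Open Scope ereal_scope.

Let pistar := all_or_nothing k beta gamma D.
Let pistar_admissible := all_or_nothing_admissible k beta0 gamma0 D0.
Let V := value k beta gamma D.
Let V_nnm := value_nonneg_measurable k beta0 gamma0 D0.

Lemma expected_value_all_or_nothing_step j :
  expected_stage_cost pistar j + expected_value pistar V j.+1 <= expected_value pistar V j.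
Proof.
have gj0 : (0 <= gamma ^+ j)%R by rewrite exprn_ge0// ltW.
rewrite -(expected_qvalue_step pistar_admissible V_nnm j).
apply: ge0_le_integral => //.
- by move=> w _; rewrite mule_ge0 ?lee_fin// qvalue_ge0.
- exact: measurable_discounted_qvalue.
- exact: measurable_discounted_value.
- move=> w _; apply: lee_wpmul2l; first by rewrite lee_fin.
  exact: qvalue_all_or_nothing_le_value.
Qed.

Lemma partial_cost_all_or_nothing_le_value m j :
  \sum_(j <= i < j + m) expected_stage_cost pistar i <= expected_value pistar V j.
Proof.
elim: m j => [|m IH] j.
  rewrite addn0 big_geq//; apply: integral_ge0 => w _.
  by rewrite mule_ge0 ?lee_fin ?exprn_ge0 ?(ltW gamma0) ?V_nnm.2.
apply: le_trans (expected_value_all_or_nothing_step j).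
rewrite addnS big_ltn ?ltnS ?leq_addr//.
by apply: leeD2l; rewrite -addSn; exact: IH.
Qed.

Lemma total_cost_all_or_nothing_le_value :
  total_cost P 0 beta gamma D pistar X <= \int[P]_w V 0%N fset0 (X 0%N w).
Proof.
rewrite (total_cost_series pistar_admissible) -(expected_value0 pistar).
apply: lime_le; first by apply: is_cvg_nneseries => i _ _; exact: expected_stage_cost_ge0.
by apply: nearW => m; have := partial_cost_all_or_nothing_le_value m 0; rewrite add0n.
Qed.

Lemma value_le_total_cost pi : admissible pi ->
  \int[P]_w V 0%N fset0 (X 0%N w) <= total_cost P 0 beta gamma D pi X.
Proof.
move=> adm; have nnmV := value_iter_nonneg_measurable k beta0 gamma0 D0.
have mV m : measurable_fun setT (fun w => value_iter k beta gamma D m 0%N fset0 (X 0%N w)).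
  exact: measurableT_comp ((nnmV m).1 0%N fset0) (mX 0%N).
rewrite (total_cost_series adm) /V /value monotone_convergence//; last 2 first.
- by move=> m w _; exact: (nnmV m).2.
- by move=> w _; exact: value_iter_ndseq.
apply: lime_le.
  apply: ereal_nondecreasing_is_cvgn => a b ab; apply: ge0_le_integral => //.
  - by move=> w _; exact: (nnmV a).2.
  - by move=> w _; exact: value_iter_ndseq.
apply: nearW => m; rewrite -(expected_value0 pi).
apply: le_trans (expected_value_iter_le_partial_cost adm m 0) _; rewrite add0n.
by apply: nneseries_lim_ge => i _ _; exact: expected_stage_cost_ge0.
Qed.

End publishing.

Theorem lemma1 (R : realType) (d : measure_display) (Omega : measurableType d)
  (P : probability Omega R) (X : nat -> Omega -> R) (k : R.-pker R ~> R)
  (beta gamma : R) (D : nat -> nat -> R) :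
  0 <= beta -> 0 < gamma -> gamma < 1 ->
  (forall tau w, 0 <= D tau w) ->
  (forall t, measurable_fun setT (X t)) ->
  (forall t w, 0 <= X t w) ->
  markov_chain P X k ->
  exists pistar : policy R,
    [/\ admissible pistar,
        (forall pi : policy R, admissible pi ->
           (total_cost P 0 beta gamma D pistar X
              <= total_cost P 0 beta gamma D pi X)%E)
      & (forall t w,
           published pistar X w t = queue pistar X w t \/
           published pistar X w t = fset0)].
Proof.
move=> beta0 gamma0 _ D0 mX X0 mc.
exists (all_or_nothing k beta gamma D); split.
- exact: all_or_nothing_admissible.
- move=> pi adm; apply: le_trans (value_le_total_cost beta0 gamma0 D0 mX X0 mc adm).
  exact: total_cost_all_or_nothing_le_value.
- by move=> t w; rewrite /published /all_or_nothing; case: ifP => _; [right | left].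
Qed.
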